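(* Let $X$ be a topological space in which every open set is a union of countably many clopen sets. Then $C_p(X)$ is an $\alpha_1$ space if, and only if, for every Borel function $\Psi:X\to\mathbb{N}^{\mathbb{N}}$ the image $\Psi[X]$ is bounded.
   Context: $C_p(X)$ is the set of continuous real-valued functions on $X$ with the topology of pointwise convergence (subspace of $\mathbb{R}^X$). In a topological space $Y$, a countable set $A$ of distinct points converges to $y$ if some (equivalently every) bijective enumeration of $A$ converges to $y$. $Y$ is an $\alpha_1$ space if for each $y\in Y$ and each sequence $A_1,A_2,\dots$ of countably infinite sets each converging to $y$, there are cofinite subsets $B_n\subseteq A_n$ such that $\bigcup_n B_n$ converges to $y$. A function $\Psi:X\to\mathbb{N}^{\mathbb{N}}$ is Borel if preimages of open sets are Borel in $X$. A set $Y\subseteq\mathbb{N}^{\mathbb{N}}$ is bounded if there is $g\in\mathbb{N}^{\mathbb{N}}$ such that for each $f\in Y$, $f(n)\le g(n)$ for all but finitely many $n$. *)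

From Stdlib Require Import Reals List.
Local Open Scope R_scope.

Record topology (X : Type) := Topology {
  open : (X -> Prop) -> Prop;
  open_full : open (fun _ => True);
  open_inter : forall U V, open U -> open V -> open (fun x => U x /\ V x);
  open_union : forall F : (X -> Prop) -> Prop,
      (forall U, F U -> open U) -> open (fun x => exists U, F U /\ U x);
  open_ext : forall U V, (forall x, U x <-> V x) -> open U -> open V
}.
Arguments open {X} _ _.

Definition clopen {X} (T : topology X) (U : X -> Prop) : Prop :=
  open T U /\ open T (fun x => ~ U x).

Definition open_countable_union_clopen {X} (T : topology X) : Prop :=
  forall U, open T U ->
    exists C : nat -> X -> Prop,
      (forall n, clopen T (C n)) /\ (forall x, U x <-> exists n, C n x).

Definition R_open (U : R -> Prop) : Prop :=
  forall x, U x -> exists eps, eps > 0 /\ forall y, Rabs (y - x) < eps -> U y.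

Definition continuous {X} (T : topology X) (f : X -> R) : Prop :=
  forall U, R_open U -> open T (fun x => U (f x)).

Definition Cp {X} (T : topology X) : Type := { f : X -> R | continuous T f }.

(** Open sets of C_p(X): the subspace topology inherited from R^X with the
    product (Tychonoff) topology, i.e. generated by the basic sets
    { g | |g x - f x| < eps for x in a finite list }. *)
Definition cp_open {X} (T : topology X) (V : Cp T -> Prop) : Prop :=
  forall f, V f -> exists (xs : list X) (eps : R), eps > 0 /\
    forall g : Cp T,
      (forall x, In x xs -> Rabs (proj1_sig g x - proj1_sig f x) < eps) -> V g.

Definition seq_converges {S : Type} (opn : (S -> Prop) -> Prop)
  (s : nat -> S) (y : S) : Prop :=
  forall V, opn V -> V y -> exists N, forall k, (N <= k)%nat -> V (s k).

(** A countable set A of distinct points converges to y: some bijective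
    enumeration nat -> A converges to y (A is countably infinite). *)
Definition converges_set {S : Type} (opn : (S -> Prop) -> Prop)
  (A : S -> Prop) (y : S) : Prop :=
  exists e : nat -> S,
    (forall m n, e m = e n -> m = n) /\
    (forall z, A z <-> exists n, e n = z) /\
    seq_converges opn e y.

Definition cofinite_subset {S : Type} (B A : S -> Prop) : Prop :=
  (forall z, B z -> A z) /\
  exists l : list S, forall z, A z -> ~ B z -> In z l.

Definition alpha1 {S : Type} (opn : (S -> Prop) -> Prop) : Prop :=
  forall (y : S) (A : nat -> S -> Prop),
    (forall n, converges_set opn (A n) y) ->
    exists B : nat -> S -> Prop,
      (forall n, cofinite_subset (B n) (A n)) /\
      converges_set opn (fun z => exists n, B n z) y.

Definition baire_open (U : (nat -> nat) -> Prop) : Prop :=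
  forall f, U f -> exists n, forall g,
    (forall i, (i < n)%nat -> g i = f i) -> U g.

Inductive borel {X} (T : topology X) : (X -> Prop) -> Prop :=
  | borel_open : forall U, open T U -> borel T U
  | borel_compl : forall A, borel T A -> borel T (fun x => ~ A x)
  | borel_cunion : forall A : nat -> X -> Prop,
      (forall n, borel T (A n)) -> borel T (fun x => exists n, A n x)
  | borel_ext : forall A B, (forall x, A x <-> B x) -> borel T A -> borel T B.

Definition borel_function {X} (T : topology X) (Psi : X -> nat -> nat) : Prop :=
  forall U, baire_open U -> borel T (fun x => U (Psi x)).

Definition baire_bounded (Y : (nat -> nat) -> Prop) : Prop :=
  exists g : nat -> nat, forall f, Y f ->
    exists N, forall n, (N <= n)%nat -> (f n <= g n)%nat.

From Stdlib Require Import Reals List Lia Lra Classical ClassicalEpsilon Cantor Wf_nat.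
Local Open Scope R_scope.

Arguments open_full {X}. Arguments open_inter {X}.
Arguments open_union {X}. Arguments open_ext {X}.

(* Both directions go through the following property of a family of sets:
   for every double sequence (C n k) of such sets with, for each n, every x in
   C n k for almost all k, there is g : N -> N such that every x lies in
   C n k for all k >= g n, for almost all n.

   If C_p(X) is alpha_1 and the C n k are clopen, the functions
   1_{X \ C n k} + c_{n,k}, with distinct constants c_{n,k} -> 0, give
   sequences converging to 0; cofinite subsets of them whose union converges
   to 0 provide g.  The property then passes to sets that are pointwise
   eventual limits of clopen sets, and these include all Borel sets because
   open sets are countable unions of clopen sets.  Applied to the sets
   {x | Psi x n <= k} it bounds Psi[X].

   Conversely, given sequences (A_n) converging to y, the modulus
   Psi x n = least m beyond which A_n stays 1/(n+1)-close to y at x is Borel;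
   if g bounds Psi[X], the tails of the A_n from index g n have a union
   converging to y. *)

Lemma classical_least (P : nat -> Prop) :
  (exists m, P m) -> exists m, P m /\ forall k, P k -> (m <= k)%nat.
Proof.
  intros [m Hm]; revert Hm.
  induction m as [m IH] using (well_founded_induction lt_wf); intros Hm.
  destruct (classic (exists k, (k < m)%nat /\ P k)) as [[k [Hk Pk]]|Hnone].
  - exact (IH k Hk Pk).
  - exists m; split; [exact Hm|]. intros k Pk.
    destruct (Nat.le_gt_cases m k); [assumption|]. exfalso; eauto.
Qed.

Lemma least_eqE (P : nat -> Prop) (m : nat) :
  (forall k, P k -> P (S k)) -> P m -> (forall k, P k -> (m <= k)%nat) ->
  forall v, m = v <-> P v /\ match v with O => True | S w => ~ P w end.
Proof.
  intros Pmono Pm Hmin v. split.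
  - intros <-. split; [exact Pm|]. destruct m as [|w]; [exact I|].
    intros Pw. specialize (Hmin w Pw). lia.
  - intros [Pv Hv]. apply Nat.le_antisymm; [exact (Hmin v Pv)|].
    destruct v as [|w]; [lia|].
    destruct (Nat.le_gt_cases (S w) m) as [Hle|Hlt]; [exact Hle|].
    exfalso; apply Hv.
    assert (Pup : forall d, P (m + d)%nat).
    { induction d; [rewrite Nat.add_0_r|rewrite Nat.add_succ_r; apply Pmono]; assumption. }
    replace w with (m + (w - m))%nat by lia. apply Pup.
Qed.

Lemma injective_eventually_notin {Y : Type} (e : nat -> Y) (l : list Y) :
  (forall m n, e m = e n -> m = n) ->
  exists K, forall k, (K <= k)%nat -> ~ In (e k) l.
Proof.
  intros e_inj. induction l as [|a l [K HK]].
  - exists 0%nat. intros k _ [].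
  - destruct (classic (exists k0, e k0 = a)) as [[k0 <-]|Hnot].
    + exists (Nat.max K (S k0)). intros k Hk [Heq|Hin].
      * apply e_inj in Heq. lia.
      * apply (HK k); [lia|exact Hin].
    + exists K. intros k Hk [Heq|Hin]; [eauto|exact (HK k Hk Hin)].
Qed.

Lemma eventually_forall_in_list {Y : Type} (Q : nat -> Y -> Prop) (xs : list Y) :
  (forall x, In x xs -> exists K, forall k, (K <= k)%nat -> Q k x) ->
  exists K, forall k, (K <= k)%nat -> forall x, In x xs -> Q k x.
Proof.
  induction xs as [|a xs IH]; intros H.
  - exists O. intros k _ x [].
  - destruct IH as [K HK]; [intros x Hx; apply H; right; exact Hx|].
    destruct (H a (or_introl eq_refl)) as [K' HK'].
    exists (Nat.max K K'). intros k Hk x [<-|Hx].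
    + apply HK'; lia.
    + apply HK; [lia|exact Hx].
Qed.

Lemma eventually_not_of_injective_tags (N : nat) :
  forall (Bad : nat -> Prop) (tag : nat -> nat -> Prop),
  (forall n, Bad n -> exists i, (i < N)%nat /\ tag n i) ->
  (forall n n' i, tag n i -> tag n' i -> n = n') ->
  exists M, forall n, (M <= n)%nat -> ~ Bad n.
Proof.
  induction N as [|N IH]; intros Bad tag Htag tag_inj.
  - exists 0%nat. intros n _ Hb. destruct (Htag n Hb) as [i [Hi _]]. lia.
  - destruct (classic (exists n0, Bad n0 /\ tag n0 N)) as [[n0 [Hb0 Ht0]]|Hnone].
    + destruct (IH (fun n => Bad n /\ ~ tag n N) tag) as [M HM]; [|exact tag_inj|].
      * intros n [Hb Hnt]. destruct (Htag n Hb) as [i [Hi Hti]].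
        exists i. split; [|exact Hti].
        destruct (Nat.eq_dec i N); [subst; contradiction|lia].
      * exists (Nat.max M (S n0)). intros n Hn Hb.
        destruct (classic (tag n N)) as [Ht|Hnt].
        -- pose proof (tag_inj _ _ _ Ht Ht0). lia.
        -- apply (HM n); [lia|split; assumption].
    + apply (IH Bad tag); [|exact tag_inj].
      intros n Hb. destruct (Htag n Hb) as [i [Hi Hti]]. exists i. split; [|exact Hti].
      destruct (Nat.eq_dec i N); [subst; exfalso; eauto|lia].
Qed.

Lemma infinite_nat_subset_enum (P : nat -> Prop) :
  (forall M, exists m, (M <= m)%nat /\ P m) ->
  exists f : nat -> nat, (forall i, P (f i)) /\ (forall i, (f i < f (S i))%nat) /\
    (forall m, P m -> exists i, f i = m).
Proof.
  intros HP.
  assert (Hnext : forall M, exists m, ((M <= m)%nat /\ P m) /\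
             forall k, ((M <= k)%nat /\ P k) -> (m <= k)%nat).
  { intros M. apply classical_least, HP. }
  pose (next := fun M => proj1_sig (constructive_indefinite_description _ (Hnext M))).
  assert (next_spec : forall M, ((M <= next M)%nat /\ P (next M)) /\
                 forall k, ((M <= k)%nat /\ P k) -> (next M <= k)%nat).
  { intros M. exact (proj2_sig (constructive_indefinite_description _ (Hnext M))). }
  pose (f := fix f i := match i with O => next 0%nat | S i => next (S (f i)) end).
  assert (f_ge : forall i, (i <= f i)%nat).
  { induction i; simpl; [lia|]. destruct (next_spec (S (f i))) as [[H _] _]. lia. }
  assert (f_onto : forall i m, P m -> (m <= f i)%nat -> exists j, f j = m).
  { induction i; intros m Pm Hm.
    - exists 0%nat. simpl in *.
      pose proof (proj2 (next_spec 0%nat) m (conj (Nat.le_0_l _) Pm)). lia.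
    - destruct (Nat.le_gt_cases m (f i)) as [H|H]; [exact (IHi m Pm H)|].
      exists (S i). simpl in *. pose proof (proj2 (next_spec (S (f i))) m (conj H Pm)). lia. }
  exists f. split; [|split].
  - intros [|i]; apply next_spec.
  - intros i. simpl. destruct (next_spec (S (f i))) as [[H _] _]. lia.
  - intros m Pm. exact (f_onto m m Pm (f_ge m)).
Qed.

(* [s] enumerates [U] with repetitions; the injection [d] shows that [U] is infinite. *)
Lemma countably_infinite_enum {Y : Type} (U : Y -> Prop) (s d : nat -> Y) :
  (forall m, U (s m)) -> (forall u, U u -> exists m, s m = u) ->
  (forall j, U (d j)) -> (forall i j, d i = d j -> i = j) ->
  exists e : nat -> Y, (forall m n, e m = e n -> m = n) /\
    (forall z, U z <-> exists n, e n = z).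
Proof.
  intros Hs s_onto Hd d_inj.
  pose (First := fun m => forall m', (m' < m)%nat -> s m' <> s m).
  assert (first_index : forall u, U u -> exists m, s m = u /\ First m).
  { intros u Hu.
    destruct (classical_least (fun m => s m = u) (s_onto u Hu)) as [m [Hm Hmin]].
    exists m. split; [exact Hm|]. intros m' Hm' Heq.
    specialize (Hmin m' (eq_trans Heq Hm)). lia. }
  destruct (infinite_nat_subset_enum First) as [f [Hf [f_step f_onto]]].
  { intros M. destruct (injective_eventually_notin d (map s (seq 0 M)) d_inj) as [K HK].
    destruct (first_index (d K) (Hd K)) as [m [Hm Hfm]].
    exists m. split; [|exact Hfm]. destruct (Nat.le_gt_cases M m) as [H|H]; [exact H|].
    exfalso. apply (HK K); [lia|]. rewrite <- Hm. apply in_map, in_seq. lia. }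
  assert (f_mono : forall i j, (i < j)%nat -> (f i < f j)%nat).
  { intros i j Hij. induction Hij; [apply f_step|]. specialize (f_step m). lia. }
  exists (fun i => s (f i)). split.
  - intros m n Heq. destruct (Nat.lt_total m n) as [H|[H|H]]; [|exact H|].
    + exfalso. exact (Hf n (f m) (f_mono _ _ H) Heq).
    + exfalso. exact (Hf m (f n) (f_mono _ _ H) (eq_sym Heq)).
  - intros z. split.
    + intros Hz. destruct (first_index z Hz) as [m [<- Hfm]].
      destruct (f_onto m Hfm) as [i <-]. eauto.
    + intros [n <-]. apply Hs.
Qed.

Lemma tail_cofinite_subset {Y : Type} (A : Y -> Prop) (s : nat -> Y) (G : nat) :
  (forall z, A z <-> exists k, s k = z) ->
  cofinite_subset (fun z => exists k, (G <= k)%nat /\ s k = z) A.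
Proof.
  intros HA. split.
  - intros z [k [_ <-]]. apply HA. eauto.
  - exists (map s (seq 0 G)). intros z Hz Hnot.
    destruct (proj1 (HA z) Hz) as [k <-].
    destruct (Nat.lt_ge_cases k G) as [Hlt|Hge]; [|exfalso; eauto].
    apply in_map, in_seq. lia.
Qed.

Lemma inv_INR_eventually_lt (eps : R) : 0 < eps ->
  exists K, forall k, (K <= k)%nat -> / (INR k + 1) < eps.
Proof.
  intros Heps. destruct (archimed_cor1 eps Heps) as [N [HN HN0]]. exists N. intros k Hk.
  apply Rle_lt_trans with (/ INR N); [|exact HN].
  apply Rinv_le_contravar; [apply lt_0_INR; exact HN0|]. apply le_INR in Hk. lra.
Qed.

Section Clopen.
Variables (X : Type) (T : topology X).

Lemma open_empty : open T (fun _ => False).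
Proof.
  apply (open_ext T (fun x => exists U, (fun _ : X -> Prop => False) U /\ U x)).
  - intros x; split; [intros [U [[] _]]|intros []].
  - apply open_union. intros U [].
Qed.

Lemma open_union2 U V : open T U -> open T V -> open T (fun x => U x \/ V x).
Proof.
  intros HU HV.
  apply (open_ext T (fun x => exists W, (W = U \/ W = V) /\ W x)).
  - intros x; split.
    + intros [W [[->| ->] H]]; auto.
    + intros [H|H]; eauto.
  - apply open_union. intros W [->| ->]; assumption.
Qed.

Lemma open_const (P : Prop) : open T (fun _ => P).
Proof.
  destruct (classic P).
  - eapply open_ext; [|apply open_full]. intros; tauto.
  - eapply open_ext; [|apply open_empty]. intros; tauto.
Qed.

Lemma clopen_ext U V : (forall x, U x <-> V x) -> clopen T U -> clopen T V.
Proof.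
  intros H [HU HnU]. split; eapply open_ext; eauto. intros x; specialize (H x); tauto.
Qed.

Lemma clopenC U : clopen T U -> clopen T (fun x => ~ U x).
Proof. intros [HU HnU]. split; [exact HnU|]. eapply open_ext; [|exact HU]. intros; tauto. Qed.

Lemma clopenI U V : clopen T U -> clopen T V -> clopen T (fun x => U x /\ V x).
Proof.
  intros [HU HnU] [HV HnV]. split; [apply open_inter; assumption|].
  eapply open_ext; [|exact (open_union2 _ _ HnU HnV)]. intros x; tauto.
Qed.

Lemma clopenU U V : clopen T U -> clopen T V -> clopen T (fun x => U x \/ V x).
Proof.
  intros HU HV. apply (clopen_ext (fun x => ~ (~ U x /\ ~ V x))); [intros; tauto|].
  apply clopenC, clopenI; apply clopenC; assumption.
Qed.

Lemma clopen_iff U V : clopen T U -> clopen T V -> clopen T (fun x => U x <-> V x).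
Proof.
  intros HU HV. apply (clopen_ext (fun x => (U x /\ V x) \/ (~ U x /\ ~ V x))); [intros; tauto|].
  apply clopenU; apply clopenI; try apply clopenC; assumption.
Qed.

Lemma borel_const (P : Prop) : borel T (fun _ => P).
Proof. apply borel_open, open_const. Qed.

Lemma borelU A B : borel T A -> borel T B -> borel T (fun x => A x \/ B x).
Proof.
  intros HA HB.
  apply (borel_ext T (fun x => exists n, (match n with O => A | _ => B end) x)).
  - intros x; split.
    + intros [[|n] H]; auto.
    + intros [H|H]; [exists O|exists (S O)]; exact H.
  - apply borel_cunion. intros [|n]; assumption.
Qed.

Lemma borelI A B : borel T A -> borel T B -> borel T (fun x => A x /\ B x).
Proof.
  intros HA HB. apply (borel_ext T (fun x => ~ (~ A x \/ ~ B x))); [intros; tauto|].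
  apply borel_compl, borelU; apply borel_compl; assumption.
Qed.

Lemma borel_cinter (A : nat -> X -> Prop) :
  (forall n, borel T (A n)) -> borel T (fun x => forall n, A n x).
Proof.
  intros HA. apply (borel_ext T (fun x => ~ exists n, ~ A n x)).
  - intros x; split; [intros H n; apply NNPP; eauto|intros H [n Hn]; auto].
  - apply borel_compl, borel_cunion. intros n; apply borel_compl, HA.
Qed.

Lemma borel_preimage_depends_first (Phi : X -> nat -> nat) :
  (forall i v, borel T (fun x => Phi x i = v)) ->
  forall n (P : (nat -> nat) -> Prop),
    (forall f g, (forall i, (i < n)%nat -> f i = g i) -> P f -> P g) ->
    borel T (fun x => P (Phi x)).
Proof.
  intros HPhi n. induction n as [|n IH]; intros P HP.
  - apply (borel_ext T (fun _ => exists f, P f)); [|apply borel_const].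
    intros x; split; [intros [f Hf]; apply (HP f); [intros; lia|exact Hf]|eauto].
  - pose (upd := fun (v : nat) (f : nat -> nat) i => if Nat.eqb i n then v else f i).
    assert (upd_same : forall f, (forall i, upd (f n) f i = f i)).
    { intros f i. unfold upd. destruct (Nat.eqb_spec i n); congruence. }
    apply (borel_ext T (fun x => exists v, Phi x n = v /\ P (upd v (Phi x)))).
    + intros x; split.
      * intros [v [<- H]]. exact (HP _ _ (fun i _ => upd_same (Phi x) i) H).
      * intros H. exists (Phi x n). split; [reflexivity|].
        exact (HP _ _ (fun i _ => eq_sym (upd_same (Phi x) i)) H).
    + apply borel_cunion. intros v. apply borelI; [apply HPhi|].
      apply (IH (fun f => P (upd v f))).
      intros f g Hfg. apply HP. intros i Hi. unfold upd.
      destruct (Nat.eqb_spec i n); [reflexivity|]. apply Hfg. lia.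
Qed.

Lemma borel_function_of_coordinates (Phi : X -> nat -> nat) :
  (forall i v, borel T (fun x => Phi x i = v)) -> borel_function T Phi.
Proof.
  intros HPhi U HU.
  pose (Ubox := fun n f => forall g, (forall i, (i < n)%nat -> g i = f i) -> U g).
  apply (borel_ext T (fun x => exists n, Ubox n (Phi x))).
  - intros x; split; [intros [n Hn]; exact (Hn _ (fun _ _ => eq_refl))|].
    intros Hx. destruct (HU _ Hx) as [n Hn]. exists n. exact Hn.
  - apply borel_cunion. intros n.
    apply (borel_preimage_depends_first Phi HPhi n (Ubox n)).
    intros f g Hfg H h Hh. apply H. intros i Hi. rewrite Hh by exact Hi. exact (eq_sym (Hfg i Hi)).
Qed.

End Clopen.


Definition uniform_tails {X} (Cl : (X -> Prop) -> Prop) : Prop :=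
  forall C : nat -> nat -> X -> Prop, (forall n k, Cl (C n k)) ->
    (forall n x, exists K, forall k, (K <= k)%nat -> C n k x) ->
    exists g : nat -> nat, forall x, exists N, forall n, (N <= n)%nat ->
      forall k, (g n <= k)%nat -> C n k x.

Definition clopen_limit {X} (T : topology X) (A : X -> Prop) : Prop :=
  exists C : nat -> X -> Prop, (forall j, clopen T (C j)) /\
    forall x, exists J, forall j, (J <= j)%nat -> (C j x <-> A x).

Section ClopenLimits.
Variables (X : Type) (T : topology X).

Lemma clopen_limit_ext A B : (forall x, A x <-> B x) -> clopen_limit T A -> clopen_limit T B.
Proof.
  intros HAB [C [HC Hlim]]. exists C. split; [exact HC|].
  intros x. destruct (Hlim x) as [J HJ]. exists J. intros j Hj. rewrite <- HAB. auto.
Qed.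

Lemma clopen_limit_clopen A : clopen T A -> clopen_limit T A.
Proof. intros HA. exists (fun _ => A). split; [intros; exact HA|]. intros x; exists O; tauto. Qed.

Lemma clopen_limitC A : clopen_limit T A -> clopen_limit T (fun x => ~ A x).
Proof.
  intros [C [HC Hlim]]. exists (fun j x => ~ C j x). split; [intros j; apply clopenC, HC|].
  intros x. destruct (Hlim x) as [J HJ]. exists J. intros j Hj. specialize (HJ j Hj). tauto.
Qed.

Lemma clopen_limitU A B :
  clopen_limit T A -> clopen_limit T B -> clopen_limit T (fun x => A x \/ B x).
Proof.
  intros [C [HC HClim]] [D [HD HDlim]]. exists (fun j x => C j x \/ D j x).
  split; [intros j; apply clopenU; auto|].
  intros x. destruct (HClim x) as [J HJ], (HDlim x) as [J' HJ'].
  exists (Nat.max J J'). intros j Hj.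
  specialize (HJ j ltac:(lia)). specialize (HJ' j ltac:(lia)). tauto.
Qed.

Hypothesis tails : uniform_tails (clopen T).

(* Diagonalisation: the approximations of [B j] are stationary from index [h j]
   on, for all x and almost all j. *)
Lemma clopen_limit_seq_approx (B : nat -> X -> Prop) :
  (forall j, clopen_limit T (B j)) ->
  exists D : nat -> X -> Prop, (forall j, clopen T (D j)) /\
    forall x, exists J, forall j, (J <= j)%nat -> (D j x <-> B j x).
Proof.
  intros HB.
  destruct (choice _ HB) as [C HC].
  destruct (tails (fun j i x => C j i x <-> C j (S i) x)) as [h Hh].
  - intros j i. apply clopen_iff; apply HC.
  - intros j x. destruct (proj2 (HC j) x) as [J HJ]. exists J. intros k Hk.
    rewrite (HJ k Hk), (HJ (S k) ltac:(lia)). tauto.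
  - exists (fun j => C j (h j)). split; [intros j; apply HC|].
    intros x. destruct (Hh x) as [N HN]. exists N. intros j Hj.
    destruct (proj2 (HC j) x) as [I HI].
    assert (Hstat : forall d, C j (h j + d)%nat x <-> C j (h j) x).
    { induction d; [rewrite Nat.add_0_r; tauto|].
      rewrite <- IHd, Nat.add_succ_r. symmetry. apply (HN j Hj). lia. }
    rewrite <- (Hstat I). apply HI. lia.
Qed.

Lemma clopen_limit_cunion (B : nat -> X -> Prop) :
  (forall j, clopen_limit T (B j)) -> clopen_limit T (fun x => exists n, B n x).
Proof.
  intros HB.
  pose (Upto := fun j x => exists i, (i <= j)%nat /\ B i x).
  assert (HUpto : forall j, clopen_limit T (Upto j)).
  { induction j.
    - apply (clopen_limit_ext (B 0%nat)); [|exact (HB 0%nat)].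
      intros x; split; [intros H; exists 0%nat; split; [lia|exact H]|].
      intros [i [Hi H]]. replace i with 0%nat in H by lia. exact H.
    - apply (clopen_limit_ext (fun x => Upto j x \/ B (S j) x)); [|apply clopen_limitU; auto].
      intros x; split.
      + intros [[i [Hi H]]|H]; [exists i|exists (S j)]; split; auto; lia.
      + intros [i [Hi H]]. destruct (Nat.eq_dec i (S j)) as [->|Hne]; [right; exact H|].
        left; exists i; split; [lia|exact H]. }
  destruct (clopen_limit_seq_approx Upto HUpto) as [D [HD Happrox]].
  exists D. split; [exact HD|]. intros x. destruct (Happrox x) as [J HJ].
  destruct (classic (exists n, B n x)) as [[n Hn]|Hnone].
  - exists (Nat.max J n). intros j Hj. rewrite (HJ j ltac:(lia)). split; [eauto|].
    intros _. exists n; split; [lia|exact Hn].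
  - exists J. intros j Hj. rewrite (HJ j Hj). split; [intros [i [_ H]]; eauto|].
    intros H; contradiction.
Qed.

Lemma borel_clopen_limit :
  open_countable_union_clopen T -> forall A, borel T A -> clopen_limit T A.
Proof.
  intros HX A HA. induction HA as [U HU| |A HA IH|].
  - destruct (HX U HU) as [C [HC HUC]].
    apply (clopen_limit_ext (fun x => exists n, C n x)); [intros x; rewrite HUC; tauto|].
    apply clopen_limit_cunion. intros j; apply clopen_limit_clopen, HC.
  - apply clopen_limitC; assumption.
  - apply clopen_limit_cunion, IH.
  - eapply clopen_limit_ext; eauto.
Qed.

Lemma uniform_tails_clopen_limit : uniform_tails (clopen_limit T).
Proof.
  intros A HA Hlim.
  destruct (clopen_limit_seq_approx (fun m => A (fst (of_nat m)) (snd (of_nat m))))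
    as [D [HD Happrox]]; [intros m; apply HA|].
  assert (HDA : forall x, exists J, forall n k, (J <= n + k)%nat ->
                  (D (to_nat (n, k)) x <-> A n k x)).
  { intros x. destruct (Happrox x) as [J HJ]. exists J. intros n k Hnk.
    rewrite HJ, cancel_of_to; [reflexivity|]. pose proof (to_nat_non_decreasing n k). lia. }
  destruct (tails (fun n k => D (to_nat (n, k)))) as [g Hg].
  - intros n k; apply HD.
  - intros n x. destruct (Hlim n x) as [K HK], (HDA x) as [J HJ].
    exists (Nat.max K J). intros k Hk. apply (HJ n k ltac:(lia)), HK. lia.
  - exists g. intros x. destruct (Hg x) as [N HN], (HDA x) as [J HJ].
    exists (Nat.max N J). intros n Hn k Hk. apply (HJ n k ltac:(lia)), (HN n ltac:(lia) k Hk).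
Qed.

Lemma borel_image_bounded_of_uniform_tails :
  open_countable_union_clopen T ->
  forall Psi : X -> nat -> nat, borel_function T Psi ->
     baire_bounded (fun f : nat -> nat => exists x : X, Psi x = f).
Proof.
  intros HX Psi HPsi.
  destruct (uniform_tails_clopen_limit (fun n k x => (Psi x n <= k)%nat)) as [g Hg].
  - intros n k. apply borel_clopen_limit; [exact HX|].
    apply (HPsi (fun f => (f n <= k)%nat)).
    intros f Hf. exists (S n). intros h Hh. rewrite Hh; [exact Hf|lia].
  - intros n x. exists (Psi x n). auto.
  - exists g. intros f [x <-]. destruct (Hg x) as [N HN]. exists N. intros n Hn.
    exact (HN n Hn _ (le_n _)).
Qed.

End ClopenLimits.

Section PointwiseConvergence.
Variables (X : Type) (T : topology X).

Lemma R_open_ball (a r : R) : R_open (fun z => Rabs (z - a) < r).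
Proof.
  intros z Hz. exists (r - Rabs (z - a)). split; [lra|]. intros w Hw.
  pose proof (Rabs_triang (w - z) (z - a)). replace (w - z + (z - a)) with (w - a) in H by ring.
  lra.
Qed.

Lemma continuous_const (c : R) : continuous T (fun _ => c).
Proof. intros U _. apply open_const. Qed.

Lemma continuous_clopen_step (D : X -> Prop) (a b : R) : clopen T D ->
  continuous T (fun x => if excluded_middle_informative (D x) then a else b).
Proof.
  intros [HD HnD] U _.
  apply (open_ext T (fun x => (D x /\ U a) \/ (~ D x /\ U b))).
  - intros x. destruct (excluded_middle_informative (D x)); tauto.
  - apply open_union2; apply open_inter; auto; apply open_const.
Qed.

Lemma open_dist_lt (f g : X -> R) (d : R) :
  continuous T f -> continuous T g -> open T (fun x => Rabs (f x - g x) < d).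
Proof.
  intros Hf Hg.
  pose (Ball := fun W => exists a r s, r + s <= d /\
      W = (fun x => Rabs (f x - a) < r /\ Rabs (g x - a) < s)).
  apply (open_ext T (fun x => exists W, Ball W /\ W x)).
  - intros x; split.
    + intros [W [[a [r [s [Hrs ->]]]] [H1 H2]]].
      pose proof (Rabs_triang (f x - a) (a - g x)). rewrite Rabs_minus_sym in H2.
      replace (f x - a + (a - g x)) with (f x - g x) in H by ring. lra.
    + intros H. set (e := Rabs (f x - g x)) in *.
      exists (fun z => Rabs (f z - f x) < (d - e) / 2 /\ Rabs (g z - f x) < e + (d - e) / 2).
      split; [exists (f x), ((d - e) / 2), (e + (d - e) / 2); split; [lra|reflexivity]|].
      rewrite Rminus_diag, Rabs_R0, Rabs_minus_sym. fold e.
      pose proof (Rabs_pos (f x - g x)). split; lra.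
  - apply open_union. intros W [a [r [s [_ ->]]]].
    apply open_inter; [apply (Hf _ (R_open_ball a r))|apply (Hg _ (R_open_ball a s))].
Qed.

Lemma cp_converges_pointwise (e : nat -> Cp T) (y : Cp T) :
  seq_converges (cp_open T) e y <->
  forall x d, 0 < d -> exists K, forall k, (K <= k)%nat ->
    Rabs (proj1_sig (e k) x - proj1_sig y x) < d.
Proof.
  split.
  - intros Hconv x d Hd.
    apply (Hconv (fun f => Rabs (proj1_sig f x - proj1_sig y x) < d));
      [|rewrite Rminus_diag, Rabs_R0; exact Hd].
    intros f Hf. exists (x :: nil), (d - Rabs (proj1_sig f x - proj1_sig y x)).
    split; [lra|]. intros g Hg. specialize (Hg x (or_introl eq_refl)).
    pose proof (Rabs_triang (proj1_sig g x - proj1_sig f x) (proj1_sig f x - proj1_sig y x)).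
    replace (proj1_sig g x - proj1_sig f x + (proj1_sig f x - proj1_sig y x))
      with (proj1_sig g x - proj1_sig y x) in H by ring. lra.
  - intros Hpt V HV Hy. destruct (HV y Hy) as [xs [eps [Heps HVy]]].
    destruct (eventually_forall_in_list
                (fun k x => Rabs (proj1_sig (e k) x - proj1_sig y x) < eps) xs) as [K HK].
    { intros x _. exact (Hpt x eps Heps). }
    exists K. intros k Hk. apply HVy, HK, Hk.
Qed.

Lemma cp_converges_of_finitely_far (U : Cp T -> Prop) (e : nat -> Cp T) (y : Cp T) :
  (forall m n, e m = e n -> m = n) -> (forall z, U z <-> exists n, e n = z) ->
  (forall x d, 0 < d -> exists l, forall u, U u ->
     ~ Rabs (proj1_sig u x - proj1_sig y x) < d -> In u l) ->
  seq_converges (cp_open T) e y.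
Proof.
  intros e_inj HU Hfar. apply cp_converges_pointwise. intros x d Hd.
  destruct (Hfar x d Hd) as [l Hl]. destruct (injective_eventually_notin e l e_inj) as [K HK].
  exists K. intros k Hk. apply NNPP. intros Hnear.
  apply (HK k Hk), Hl; [apply HU; eauto|exact Hnear].
Qed.

End PointwiseConvergence.

Arguments continuous_const {X}.

Section Alpha1Tails.
Variables (X : Type) (T : topology X) (x0 : X).
Variable C : nat -> nat -> X -> Prop.
Hypothesis C_clopen : forall n k, clopen T (C n k).
Hypothesis C_lim : forall n x, exists K, forall k, (K <= k)%nat -> C n k x.

(* Pairwise distinct heights, so that [(n, k) |-> step n k] is injective. *)
Let c n k := / (INR (to_nat (n, k)) + 2).

Let c_bounds n k : 0 < c n k <= / 2.
Proof.
  unfold c. pose proof (pos_INR (to_nat (n, k))).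
  split; [apply Rinv_0_lt_compat|apply Rinv_le_contravar]; lra.
Qed.

Let c_le_inv n k : c n k <= / (INR k + 1).
Proof.
  unfold c. pose proof (le_INR _ _ (to_nat_non_decreasing n k)) as H.
  rewrite plus_INR in H. pose proof (pos_INR n). pose proof (pos_INR k).
  apply Rinv_le_contravar; lra.
Qed.

Definition step n k : Cp T :=
  exist (continuous T) _ (continuous_clopen_step X T (C n k) (c n k) (1 + c n k) (C_clopen n k)).

Lemma step_inj n k n' k' : step n k = step n' k' -> n = n' /\ k = k'.
Proof.
  intros Heq. apply (f_equal (fun f : Cp T => proj1_sig f x0)) in Heq. simpl in Heq.
  assert (Hc : c n k = c n' k').
  { pose proof (c_bounds n k). pose proof (c_bounds n' k').
    destruct (excluded_middle_informative (C n k x0));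
      destruct (excluded_middle_informative (C n' k' x0)); lra. }
  unfold c in Hc. apply Rinv_eq_reg, Rplus_eq_reg_r, INR_eq in Hc.
  apply (f_equal of_nat) in Hc. rewrite !cancel_of_to in Hc. inversion Hc. auto.
Qed.

Let zero : Cp T := exist (continuous T) _ (continuous_const T 0).

Lemma step_converges n : seq_converges (cp_open T) (step n) zero.
Proof.
  apply cp_converges_pointwise. intros x d Hd.
  destruct (C_lim n x) as [K1 HK1], (inv_INR_eventually_lt d Hd) as [K2 HK2].
  exists (Nat.max K1 K2). intros k Hk. simpl.
  destruct (excluded_middle_informative (C n k x)) as [_|Hout]; [|exfalso; apply Hout, HK1; lia].
  pose proof (c_bounds n k). pose proof (c_le_inv n k). pose proof (HK2 k ltac:(lia)).
  rewrite Rminus_0_r, Rabs_right; lra.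
Qed.

Hypothesis alpha1_Cp : alpha1 (cp_open T).

Lemma uniform_tails_of_steps :
  exists g : nat -> nat, forall x, exists N, forall n, (N <= n)%nat ->
    forall k, (g n <= k)%nat -> C n k x.
Proof.
  destruct (alpha1_Cp zero (fun n z => exists k, step n k = z))
    as [B [HB [e [e_inj [HeB e_conv]]]]].
  { intros n. exists (step n). split; [intros k k' H; apply step_inj in H; tauto|].
    split; [tauto|apply step_converges]. }
  assert (HBtail : forall n, exists K, forall k, (K <= k)%nat -> B n (step n k)).
  { intros n. destruct (HB n) as [_ [l Hl]].
    destruct (injective_eventually_notin (step n) l) as [K HK];
      [intros k k' H; apply step_inj in H; tauto|].
    exists K. intros k Hk. apply NNPP. intros Hout. apply (HK k Hk), Hl; eauto. }
  destruct (choice _ HBtail) as [g Hg].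
  exists g. intros x.
  destruct (proj1 (cp_converges_pointwise X T e zero) e_conv x (/ 2)) as [N0 HN0]; [lra|].
  (* Bad members of [B n] lie at a position below [N0] of [e], where [e] is
     still 1/2-far from zero at x. *)
  destruct (eventually_not_of_injective_tags N0 (fun n => exists k, (g n <= k)%nat /\ ~ C n k x)
              (fun n i => exists k, e i = step n k)) as [M HM].
  - intros n [k [Hk Hout]].
    destruct (proj1 (HeB (step n k))) as [i Hi]; [exists n; apply Hg, Hk|].
    exists i. split; [|eauto].
    destruct (Nat.lt_ge_cases i N0) as [Hlt|Hge]; [exact Hlt|exfalso].
    specialize (HN0 i Hge). rewrite Hi in HN0. simpl in HN0.
    destruct (excluded_middle_informative (C n k x)); [contradiction|].
    pose proof (c_bounds n k). rewrite Rminus_0_r, Rabs_right in HN0; lra.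
  - intros n n' i [k Hk] [k' Hk']. rewrite Hk in Hk'. apply step_inj in Hk'. tauto.
  - exists M. intros n Hn k Hk. apply NNPP. intros Hout. apply (HM n Hn). eauto.
Qed.

End Alpha1Tails.

Lemma uniform_tails_of_alpha1 {X} (T : topology X) :
  alpha1 (cp_open T) -> uniform_tails (clopen T).
Proof.
  intros Ha C HC Hlim. destruct (classic (inhabited X)) as [[x0]|Hempty].
  - exact (uniform_tails_of_steps X T x0 C HC Hlim Ha).
  - exists (fun _ => O). intros x. exfalso. apply Hempty. constructor. exact x.
Qed.

Section BoundedAlpha1.
Variables (X : Type) (T : topology X) (y : Cp T).
Variable en : nat -> nat -> Cp T.
Hypothesis en_inj : forall n m k, en n m = en n k -> m = k.
Hypothesis en_conv : forall n, seq_converges (cp_open T) (en n) y.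

Definition close_from n m x :=
  forall k, (m <= k)%nat -> Rabs (proj1_sig (en n k) x - proj1_sig y x) < / (INR n + 1).

Lemma close_from_succ n m x : close_from n m x -> close_from n (S m) x.
Proof. intros H k Hk. apply H. lia. Qed.

Lemma borel_close_from n m : borel T (close_from n m).
Proof.
  apply borel_cinter. intros k. destruct (Compare_dec.le_dec m k) as [Hmk|Hmk].
  - eapply borel_ext;
      [|apply borel_open, (open_dist_lt X T (proj1_sig (en n k)) (proj1_sig y) (/ (INR n + 1)));
        apply proj2_sig].
    intros x. simpl. tauto.
  - eapply borel_ext; [|apply (borel_const X T True)]. intros x. simpl. tauto.
Qed.

Lemma ex_least_close_from x n :
  exists m, close_from n m x /\ forall k, close_from n k x -> (m <= k)%nat.
Proof.
  apply classical_least, (proj1 (cp_converges_pointwise X T _ _) (en_conv n)).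
  pose proof (pos_INR n). apply Rinv_0_lt_compat. lra.
Qed.

Definition modulus x n : nat :=
  proj1_sig (constructive_indefinite_description _ (ex_least_close_from x n)).

Lemma modulus_spec x n :
  close_from n (modulus x n) x /\ forall k, close_from n k x -> (modulus x n <= k)%nat.
Proof. exact (proj2_sig (constructive_indefinite_description _ (ex_least_close_from x n))). Qed.

Lemma borel_function_modulus : borel_function T modulus.
Proof.
  apply borel_function_of_coordinates. intros n v.
  apply (borel_ext T (fun x => close_from n v x /\
                        match v with O => True | S w => ~ close_from n w x end)).
  - intros x. destruct (modulus_spec x n) as [Hm Hmin].
    symmetry.
    exact (least_eqE (fun m => close_from n m x) _ (fun m => close_from_succ n m x) Hm Hmin v).
  - apply borelI; [apply borel_close_from|].
    destruct v; [apply borel_const|apply borel_compl, borel_close_from].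
Qed.

Variable G : nat -> nat.
Hypothesis G_bounds : forall x, exists N, forall n, (N <= n)%nat -> (modulus x n <= G n)%nat.

Let Tails z := exists n k, (G n <= k)%nat /\ en n k = z.

(* Large n are close by the choice of G; each of the finitely many small n has
   only finitely many far terms. *)
Lemma tails_finitely_far x d : 0 < d -> exists l, forall u, Tails u ->
  ~ Rabs (proj1_sig u x - proj1_sig y x) < d -> In u l.
Proof.
  intros Hd. destruct (G_bounds x) as [Nx HNx], (inv_INR_eventually_lt d Hd) as [n0 Hn0].
  set (M := Nat.max Nx n0).
  destruct (eventually_forall_in_list
              (fun k n => Rabs (proj1_sig (en n k) x - proj1_sig y x) < d) (seq 0 M)) as [K HK].
  { intros n _. exact (proj1 (cp_converges_pointwise X T _ _) (en_conv n) x d Hd). }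
  exists (flat_map (fun n => map (en n) (seq 0 K)) (seq 0 M)).
  intros u [n [k [Hk <-]]] Hfar. apply in_flat_map. exists n.
  destruct (Nat.lt_ge_cases n M) as [HnM|HnM].
  - split; [apply in_seq; lia|]. apply in_map, in_seq.
    destruct (Nat.lt_ge_cases k K) as [HkK|HkK]; [lia|].
    exfalso. apply Hfar, (HK k HkK), in_seq. lia.
  - exfalso. apply Hfar. apply Rlt_trans with (/ (INR n + 1)); [|apply Hn0; lia].
    apply (proj1 (modulus_spec x n)). specialize (HNx n ltac:(lia)). lia.
Qed.

Lemma tails_converge : converges_set (cp_open T) Tails y.
Proof.
  destruct (countably_infinite_enum Tails
              (fun m => en (fst (of_nat m)) (G (fst (of_nat m)) + snd (of_nat m))%nat)
              (fun j => en O (G O + j)%nat)) as [e [e_inj HeT]].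
  - intros m. exists (fst (of_nat m)), (G (fst (of_nat m)) + snd (of_nat m))%nat. split; [lia|auto].
  - intros u [n [k [Hk <-]]]. exists (to_nat (n, (k - G n)%nat)).
    rewrite cancel_of_to. simpl. f_equal. lia.
  - intros j. exists O, (G O + j)%nat. split; [lia|auto].
  - intros i j H. apply en_inj in H. lia.
  - exists e. split; [exact e_inj|split; [exact HeT|]].
    apply (cp_converges_of_finitely_far X T Tails); [exact e_inj|exact HeT|].
    exact tails_finitely_far.
Qed.

End BoundedAlpha1.

Lemma alpha1_of_borel_image_bounded {X} (T : topology X) :
  (forall Psi : X -> nat -> nat, borel_function T Psi ->
     baire_bounded (fun f : nat -> nat => exists x : X, Psi x = f)) ->
  alpha1 (cp_open T).
Proof.
  intros Hbounded y A HA.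
  destruct (choice _ HA) as [en Hen].
  assert (en_inj : forall n m k, en n m = en n k -> m = k) by apply Hen.
  assert (en_conv : forall n, seq_converges (cp_open T) (en n) y) by apply Hen.
  destruct (Hbounded _ (borel_function_modulus X T y en en_conv)) as [G HG].
  exists (fun n z => exists k, (G n <= k)%nat /\ en n k = z). split.
  - intros n. apply tail_cofinite_subset, Hen.
  - apply (tails_converge X T y en en_inj en_conv G).
    intros x. exact (HG _ (ex_intro _ x eq_refl)).
Qed.

Theorem mainTheorem4 (X : Type) (T : topology X)
  (HX : open_countable_union_clopen T) :
  alpha1 (cp_open T) <->
  (forall Psi : X -> nat -> nat, borel_function T Psi ->
     baire_bounded (fun f : nat -> nat => exists x : X, Psi x = f)).
Proof.
  split.
  - intros Ha. apply borel_image_bounded_of_uniform_tails;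
      [apply uniform_tails_of_alpha1, Ha|exact HX].
  - apply alpha1_of_borel_image_bounded.
Qed.
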